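(* Let $k,n\ge1$, $\mathbf Q_0,\mathbf Q_1,\dots,\mathbf Q_n\in\mathbb S^k$, and let $\mathcal K\subseteq\mathbb R^k$ be a nonempty closed convex cone such that $\mathcal L:=\{\mathbf x\in\mathcal K:\mathbf e_1^\top\mathbf x=1\}$ is nonempty and bounded. Then the optimal value of $$\sup\ \mathbf Q_0\bullet\mathbf X\quad\text{s.t.}\quad\mathbf e_1\mathbf e_1^\top\bullet\mathbf X=1,\ \mathbf X\in\mathcal{CP}(\mathcal K),\ \mathbf Q_i\bullet\mathbf X=0\ \forall i\in[n]$$ equals the optimal value of $$\inf\ \beta\quad\text{s.t.}\quad\beta\mathbf e_1\mathbf e_1^\top+\sum_{i=1}^n\psi_i\mathbf Q_i-\mathbf Q_0\in\mathcal{COP}(\mathcal K),\ \beta\in\mathbb R,\ \boldsymbol\psi\in\mathbb R^n.$$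
   Context: $\mathbb S^k$ is the space of symmetric $k\times k$ matrices, $\mathbf A\bullet\mathbf B=\mathrm{trace}(\mathbf A\mathbf B)$, $\mathbf e_1$ is the first standard basis vector of $\mathbb R^k$, $[n]=\{1,\dots,n\}$. $\mathcal{COP}(\mathcal K)=\{\mathbf M\in\mathbb S^k:\mathbf x^\top\mathbf M\mathbf x\ge0\ \forall\mathbf x\in\mathcal K\}$ (copositive matrices with respect to $\mathcal K$), and $\mathcal{CP}(\mathcal K)$ is its dual cone in $\mathbb S^k$ under $\bullet$ (completely positive matrices with respect to $\mathcal K$). *)

From HB Require Import structures.
From mathcomp Require Import all_boot all_order all_algebra.
From mathcomp Require Import all_classical all_reals all_analysis.
Set Implicit Arguments. Unset Strict Implicit. Unset Printing Implicit Defensive.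
Import Order.TTheory GRing.Theory Num.Theory.
Import numFieldNormedType.Exports.
Local Open Scope ring_scope.
Local Open Scope classical_set_scope.

Section Defs.
Variable R : realType.

Definition symmx (k : nat) (A : 'M[R]_k) : Prop := A^T = A.

Definition frob (k : nat) (A B : 'M[R]_k) : R := \tr (A *m B).

Definition qform (k : nat) (M : 'M[R]_k) (x : 'cV[R]_k) : R := (x^T *m M *m x) 0 0.

Definition COP (k : nat) (K : set 'cV[R]_k) : set 'M[R]_k :=
  [set M | symmx M /\ forall x, K x -> 0 <= qform M x].

Definition CP (k : nat) (K : set 'cV[R]_k) : set 'M[R]_k :=
  [set X | symmx X /\ forall M, COP K M -> 0 <= frob M X].

Definition convex_cone (k : nat) (K : set 'cV[R]_k) : Prop :=
  (forall x y, K x -> K y -> K (x + y)) /\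
  (forall (t : R) x, 0 <= t -> K x -> K (t *: x)).

(* boundedness of a subset of R^k (entrywise bound; all norms equivalent) *)
Definition bounded_vset (k : nat) (L : set 'cV[R]_k) : Prop :=
  exists r : R, forall x, L x -> forall i, `|x i 0| <= r.

Definition e1 (k : nat) : 'cV[R]_k.+1 := delta_mx 0 0.

End Defs.

From HB Require Import structures.
From mathcomp Require Import all_boot all_order all_algebra.
From mathcomp Require Import all_classical all_reals all_analysis.
From mathcomp Require Import ring lra.
Import Order.TTheory GRing.Theory Num.Theory.
Import numFieldNormedType.Exports.
Set Implicit Arguments. Unset Strict Implicit. Unset Printing Implicit Defensive.
Local Open Scope ring_scope.
Local Open Scope classical_set_scope.

(* Let pi(A) be the value of the dual problem with objective sym(A) = (A + A^T)/2.
   Boundedness of the slice {x in K | x_1 = 1} gives |x_i| <= r x_1 on K, so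
   t e_1 e_1^T - S is copositive for t large and pi is finite.  If the homogeneous
   dual (A = 0) has a feasible t < 0, adding large multiples of it drives the dual
   value to -oo, while weak duality leaves the primal infeasible.  Otherwise pi is
   sublinear on all matrices, and a finite-dimensional Hahn-Banach argument, one
   coordinate direction at a time, yields Y with <A, Y> <= pi(A) for all A and
   equality at Q_0.  Testing against +-e_1 e_1^T, +-Q_i, skew matrices and -M for
   M copositive shows that Y is primal feasible, so the primal value reaches
   pi(Q_0); weak duality gives the other inequality. *)

Section InfRange.
Variable R : realType.
Implicit Types f g : R -> R.

Lemma inf_range_le f b s : (forall s, b <= f s) -> inf (range f) <= f s.
Proof. by move=> fb; apply: ge_inf; [exists b => _ [u _ <-] | exists s]. Qed.

Lemma le_inf_range f a : (forall s, a <= f s) -> a <= inf (range f).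
Proof. by move=> fa; apply: lb_le_inf; [exists (f 0), 0 | move=> _ [u _ <-]]. Qed.

Lemma inf_range_shift f g a b : (forall s, b <= g s) ->
  (forall s, exists s', f s = g s' + a) -> (forall s', exists s, f s = g s' + a) ->
  inf (range f) = inf (range g) + a.
Proof.
move=> gb fg gf; apply/eqP; rewrite eq_le; apply/andP; split.
  rewrite -lerBlDr; apply: le_inf_range => s'.
  have [s fs] := gf s'; rewrite lerBlDr -fs.
  by apply: (inf_range_le (b := b + a)) => u; have [u' ->] := fg u; rewrite lerD2r.
apply: le_inf_range => s; have [s' ->] := fg s.
by rewrite lerD2r (inf_range_le (b := b)).
Qed.

End InfRange.

Section Sublinear.
Variables (R : realType) (V : lmodType R).

Definition sublinear (p : V -> R) :=
  (forall x y, p (x + y) <= p x + p y) /\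
  (forall (t : R) x, 0 < t -> p (t *: x) = t * p x).

Definition affine_along (p : V -> R) (w : V) (d : R) :=
  forall x (t : R), p (x + t *: w) = p x + t * d.

Lemma sublinear0 p : sublinear p -> p 0 = 0.
Proof. by case=> _ hom; have := hom 2 0 (ltr0n _ 2); rewrite scaler0; lra. Qed.

Lemma sublinear_oppr_le p x : sublinear p -> - p (- x) <= p x.
Proof.
move=> hp; have := proj1 hp x (- x).
by rewrite subrr (sublinear0 hp); lra.
Qed.

Lemma affine_along_sum q (I : Type) (s : seq I) (z : I -> V) (a : I -> R) :
  sublinear q -> (forall i, affine_along q (z i) (q (z i))) ->
  q (\sum_(i <- s) a i *: z i) = \sum_(i <- s) a i * q (z i).
Proof.
move=> hq hz; elim: s => [|i s IH]; first by rewrite !big_nil (sublinear0 hq).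
by rewrite !big_cons addrC hz IH addrC.
Qed.

(* The one-step Hahn-Banach extension: the largest minorant of [p] that is
   affine with slope [c] along [z]. *)
Definition extend_along (p : V -> R) (z : V) (c : R) (x : V) : R :=
  inf (range (fun s => p (x + s *: z) - s * c)).

Section ExtendAlong.
Variables (p : V -> R) (z : V) (c : R).
Hypotheses (hp : sublinear p) (hcN : - p (- z) <= c) (hc : c <= p z).
Local Notation q := (extend_along p z c).

Lemma mul_le_sublinear s : s * c <= p (s *: z).
Proof.
have [s_lt0|s_gt0|->] := ltgtP s 0; last by rewrite mul0r scale0r (sublinear0 hp).
- have Ns_ge0 : 0 <= - s by rewrite oppr_ge0 ltW.
  rewrite -[s *: z]opprK -scaleNr -scalerN (proj2 hp) ?oppr_gt0 //.
  by have := ler_wpM2l Ns_ge0 hcN; lra.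
- by rewrite (proj2 hp) // ler_wpM2l // ltW.
Qed.

Lemma extend_along_lbound x s : - p (- x) <= p (x + s *: z) - s * c.
Proof.
have := proj1 hp (x + s *: z) (- x); rewrite addrC addKr.
by have := mul_le_sublinear s; lra.
Qed.

Lemma extend_along_le x s : q x <= p (x + s *: z) - s * c.
Proof. exact/inf_range_le/extend_along_lbound. Qed.

Lemma le_extend_along x a : (forall s, a <= p (x + s *: z) - s * c) -> a <= q x.
Proof. exact: le_inf_range. Qed.

Lemma extend_along_le_self x : q x <= p x.
Proof. by have := extend_along_le x 0; rewrite scale0r addr0 mul0r subr0. Qed.

Lemma extend_along_subadditive x y : q (x + y) <= q x + q y.
Proof.
have le_sum s1 s2 : q (x + y) <= p (x + s1 *: z) - s1 * c + (p (y + s2 *: z) - s2 * c).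
  apply: le_trans (extend_along_le _ (s1 + s2)) _.
  have := proj1 hp (x + s1 *: z) (y + s2 *: z).
  by rewrite addrACA -scalerDl; lra.
have le_q s2 : q (x + y) - (p (y + s2 *: z) - s2 * c) <= q x.
  by apply: le_extend_along => s1; have := le_sum s1 s2; lra.
suff : q (x + y) - q x <= q y by lra.
by apply: le_extend_along => s2; have := le_q s2; lra.
Qed.

Lemma extend_along_homogeneous t x : 0 < t -> q (t *: x) = t * q x.
Proof.
move=> t_gt0; have t_neq0 : t != 0 by rewrite gt_eqF.
apply/eqP; rewrite eq_le; apply/andP; split.
  rewrite -ler_pdivrMl //; apply: le_extend_along => s.
  rewrite ler_pdivrMl //; apply: le_trans (extend_along_le _ (t * s)) _.
  by rewrite -scalerA -scalerDr (proj2 hp) // mulrBr mulrA.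
apply: le_extend_along => s.
apply: le_trans (ler_wpM2l (ltW t_gt0) (extend_along_le x (s / t))) _.
have -> : x + (s / t) *: z = t^-1 *: (t *: x + s *: z).
  by rewrite scalerDr !scalerA mulVf // scale1r mulrC.
by rewrite (proj2 hp) ?invr_gt0 // mulrBr mulrA divff // mul1r mulrA mulrCA mulfV // mulr1.
Qed.

Lemma extend_along_sublinear : sublinear q.
Proof.
by split; [exact: extend_along_subadditive | exact: extend_along_homogeneous].
Qed.

Lemma extend_along_affine : affine_along q z c.
Proof.
move=> x t; rewrite /extend_along; apply: (inf_range_shift (extend_along_lbound x)).
- by move=> s; exists (t + s); rewrite scalerDl addrA; lra.
- by move=> s; exists (s - t); rewrite -addrA -scalerDl addrCA subrr addr0; lra.
Qed.

Lemma extend_along_affine_along w d : affine_along p w d -> affine_along q w d.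
Proof.
move=> hw x t; rewrite /extend_along; apply: (inf_range_shift (extend_along_lbound x)).
- by move=> s; exists s; rewrite addrAC hw; lra.
- by move=> s; exists s; rewrite addrAC hw; lra.
Qed.

End ExtendAlong.

Lemma sublinear_extend_seq (zs : seq V) p : sublinear p -> exists q, [/\ sublinear q,
  forall x, q x <= p x, forall z, z \in zs -> affine_along q z (q z) &
  forall w d, affine_along p w d -> affine_along q w d].
Proof.
elim: zs p => [|z zs IH] p hp; first by exists p.
have hpzN := sublinear_oppr_le z hp.
have [q [hq qp qzs qaff]] := IH _ (extend_along_sublinear hp hpzN (lexx (p z))).
have qz : affine_along q z (p z) by apply/qaff/extend_along_affine.
exists q; split => // [x|z'|w d hw].
- exact: le_trans (qp x) (extend_along_le_self hp hpzN (lexx _) x).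
- rewrite in_cons => /predU1P[->|]; last exact: qzs.
  by have := qz 0 1; rewrite add0r scale1r mul1r (sublinear0 hq) add0r => ->.
- exact/qaff/extend_along_affine_along.
Qed.

End Sublinear.

Section MatrixForms.
Variables (R : realType) (m : nat).
Implicit Types (M N X Y : 'M[R]_m) (x : 'cV[R]_m).

Lemma frobE M X : frob M X = \sum_i \sum_j M i j * X j i.
Proof. by apply: eq_bigr => i _; rewrite mxE. Qed.

Lemma frobD M N X : frob (M + N) X = frob M X + frob N X.
Proof. by rewrite /frob mulmxDl mxtraceD. Qed.

Lemma frobZ a M X : frob (a *: M) X = a * frob M X.
Proof. by rewrite /frob -scalemxAl mxtraceZ. Qed.

Lemma frobN M X : frob (- M) X = - frob M X.
Proof. by rewrite -scaleN1r frobZ mulN1r. Qed.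

Lemma frob0 X : frob 0 X = 0.
Proof. by rewrite /frob mul0mx mxtrace0. Qed.

Lemma frob_sum (I : finType) (F : I -> 'M[R]_m) X :
  frob (\sum_i F i) X = \sum_i frob (F i) X.
Proof. exact: (big_morph (fun M => frob M X) (fun M N => frobD M N X) (frob0 X)). Qed.

Lemma frob_delta i j X : frob (delta_mx i j) X = X j i.
Proof.
rewrite frobE (bigD1 i) //= [S in _ + S]big1; last first.
  by move=> i' /negbTE ne_i'i; rewrite big1 // => j' _; rewrite mxE ne_i'i mul0r.
rewrite addr0 (bigD1 j) //= [S in _ + S]big1; last first.
  by move=> j' /negbTE ne_j'j; rewrite mxE ne_j'j andbF mul0r.
by rewrite mxE !eqxx mul1r addr0.
Qed.

Lemma frob_eq_of_dominated (p : 'M[R]_m -> R) Y A c :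
  (forall B, frob B Y <= p B) -> p A <= c -> p (- A) <= - c -> frob A Y = c.
Proof. by move=> Yp; have := Yp A; have := Yp (- A); rewrite frobN; lra. Qed.

Lemma qformE M x : qform M x = \sum_i \sum_j x i 0 * M i j * x j 0.
Proof.
rewrite /qform mxE exchange_big; apply: eq_bigr => j _.
by rewrite mxE big_distrl; apply: eq_bigr => i _; rewrite !mxE.
Qed.

Lemma qformD M N x : qform (M + N) x = qform M x + qform N x.
Proof. by rewrite /qform mulmxDr mulmxDl mxE. Qed.

Lemma qformZ a M x : qform (a *: M) x = a * qform M x.
Proof. by rewrite /qform -scalemxAr -scalemxAl mxE. Qed.

Lemma qformN M x : qform (- M) x = - qform M x.
Proof. by rewrite -scaleN1r qformZ mulN1r. Qed.

Lemma qform0 x : qform 0 x = 0.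
Proof. by rewrite /qform mulmx0 mul0mx mxE. Qed.

Lemma qform_delta i x : qform (delta_mx i i) x = x i 0 ^+ 2.
Proof.
rewrite qformE (bigD1 i) //= [S in _ + S]big1; last first.
  by move=> i' /negbTE ne_i'i; rewrite big1 // => j _; rewrite mxE ne_i'i mulr0 mul0r.
rewrite addr0 (bigD1 i) //= [S in _ + S]big1; last first.
  by move=> j /negbTE ne_ji; rewrite mxE ne_ji andbF mulr0 mul0r.
by rewrite mxE eqxx mulr1 addr0 expr2.
Qed.

Lemma symmxP M : symmx M <-> forall i j, M j i = M i j.
Proof.
split=> [sM i j|sM]; first by rewrite -[in RHS]sM mxE.
by apply/matrixP => i j; rewrite mxE sM.
Qed.

Lemma symmxD M N : symmx M -> symmx N -> symmx (M + N).
Proof. by move=> sM sN; rewrite /symmx linearD /= sM sN. Qed.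

Lemma symmxZ a M : symmx M -> symmx (a *: M).
Proof. by move=> sM; rewrite /symmx linearZ /= sM. Qed.

Lemma symmxN M : symmx M -> symmx (- M).
Proof. by move=> sM; rewrite /symmx linearN /= sM. Qed.

Lemma symmx0 : symmx (0 : 'M[R]_m).
Proof. exact: trmx0. Qed.

Lemma symmx_delta i : symmx (delta_mx i i : 'M[R]_m).
Proof. exact: trmx_delta. Qed.

Variable K : set 'cV[R]_m.

Lemma COP0 : COP K 0.
Proof. by split=> [|x _]; [exact: symmx0 | rewrite qform0]. Qed.

Lemma COPD M N : COP K M -> COP K N -> COP K (M + N).
Proof.
move=> [sM M_ge0] [sN N_ge0]; split=> [|x Kx]; first exact: symmxD.
by rewrite qformD addr_ge0 ?M_ge0 ?N_ge0.
Qed.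

Lemma COPZ a M : 0 <= a -> COP K M -> COP K (a *: M).
Proof.
move=> a_ge0 [sM M_ge0]; split=> [|x Kx]; first exact: symmxZ.
by rewrite qformZ mulr_ge0 ?M_ge0.
Qed.

Lemma COP_delta i : COP K (delta_mx i i).
Proof. by split=> [|x _]; [exact: symmx_delta | rewrite qform_delta sqr_ge0]. Qed.

Definition sym_part M := 2^-1 *: (M + M^T).

Lemma sym_part_id M : symmx M -> sym_part M = M.
Proof. by move=> /symmxP sM; apply/matrixP => i j; rewrite !mxE sM; lra. Qed.

Lemma symmx_sym_part M : symmx (sym_part M).
Proof. by apply/symmxP => i j; rewrite !mxE addrC. Qed.

Lemma sym_partD M N : sym_part (M + N) = sym_part M + sym_part N.
Proof. by apply/matrixP => i j; rewrite !mxE; ring. Qed.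

Lemma sym_partZ a M : sym_part (a *: M) = a *: sym_part M.
Proof. by apply/matrixP => i j; rewrite !mxE; ring. Qed.

Lemma sym_partN M : sym_part (- M) = - sym_part M.
Proof. by rewrite -scaleN1r sym_partZ scaleN1r. Qed.

Lemma sym_part_skew M : sym_part (M - M^T) = 0.
Proof.
rewrite sym_partD sym_partN; suff -> : sym_part M^T = sym_part M by rewrite subrr.
by rewrite /sym_part trmxK addrC.
Qed.

Lemma sym_part0 : sym_part 0 = 0.
Proof. by rewrite /sym_part trmx0 addr0 scaler0. Qed.

End MatrixForms.

Lemma sublinear_frob_support (R : realType) (m : nat) (p : 'M[R]_m -> R) Z :
  sublinear p -> exists Y, (forall A, frob A Y <= p A) /\ frob Z Y = p Z.
Proof.
move=> hp; have hpZN := sublinear_oppr_le Z hp.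
have hq1 := extend_along_sublinear hp hpZN (lexx (p Z)).
pose basis := [seq delta_mx ij.1 ij.2 : 'M[R]_m | ij <- enum {: 'I_m * 'I_m}].
have [q [hq qq1 q_basis q_aff]] := sublinear_extend_seq basis hq1.
have q_delta (ij : 'I_m * 'I_m) :
    affine_along q (delta_mx ij.1 ij.2) (q (delta_mx ij.1 ij.2)).
  by apply: q_basis; apply: map_f; rewrite mem_enum.
exists (\matrix_(i, j) q (delta_mx j i)).
have frob_q A : frob A (\matrix_(i, j) q (delta_mx j i)) = q A.
  rewrite frobE [in RHS](matrix_sum_delta A) !pair_bigA /=.
  rewrite (affine_along_sum _ (fun ij => A ij.1 ij.2) hq q_delta).
  by apply: eq_bigr => ij _; rewrite mxE.
split=> [A|]; rewrite frob_q.
  exact: le_trans (qq1 A) (extend_along_le_self hp hpZN (lexx _) A).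
have := q_aff _ _ (extend_along_affine hp hpZN (lexx _)) 0 1.
by rewrite add0r scale1r mul1r (sublinear0 hq) add0r.
Qed.

Section ConeBound.
Variables (R : realType) (k : nat) (K : set 'cV[R]_k.+1).
Hypotheses (hKcone : convex_cone K)
  (hLne : [set x | K x /\ ((e1 R k)^T *m x) 0 0 = 1] !=set0)
  (hLbd : bounded_vset [set x | K x /\ ((e1 R k)^T *m x) 0 0 = 1]).

Lemma e1_tr_mul (x : 'cV[R]_k.+1) : ((e1 R k)^T *m x) 0 0 = x 0 0.
Proof. by rewrite /e1 trmx_delta -rowE mxE. Qed.

Lemma cone_slice_bound : exists2 r : R, 0 <= r &
  forall x, K x -> x 0 0 = 1 -> forall i, `|x i 0| <= r.
Proof.
have [r Lr] := hLbd; have [y [Ky]] := hLne; rewrite e1_tr_mul => y1.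
have Kr x : K x -> x 0 0 = 1 -> forall i, `|x i 0| <= r.
  by move=> Kx x1; apply: Lr; rewrite /= e1_tr_mul.
by exists r => //; apply: le_trans (Kr y Ky y1 0); rewrite y1 normr1.
Qed.

Lemma cone_first_entry0 x : K x -> x 0 0 = 0 -> x = 0.
Proof.
move=> Kx x0; apply/matrixP => i j; rewrite ord1 mxE.
apply/eqP/negPn/negP => xi_neq0; have xi_gt0 : 0 < `|x i 0| by rewrite normr_gt0.
have [r r_ge0 Kr] := cone_slice_bound; have [y [Ky]] := hLne; rewrite e1_tr_mul => y1.
pose s := (2 * r + 1) / `|x i 0|.
have s_ge0 : 0 <= s by rewrite divr_ge0 // ?ltW //; lra.
have Kys : K (y + s *: x) by apply: (proj1 hKcone) => //; apply: (proj2 hKcone).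
have := Kr _ Kys; rewrite !mxE y1 x0 mulr0 addr0 => /(_ erefl i); rewrite !mxE.
have sxi : `|s * x i 0| = 2 * r + 1.
  by rewrite normrM ger0_norm // /s -mulrA mulVf ?gt_eqF // mulr1.
have := ler_normB (y i 0 + s * x i 0) (y i 0); rewrite addrAC subrr add0r.
by have := Kr y Ky y1 i; lra.
Qed.

Lemma cone_entry_bound : exists2 r : R, 0 <= r &
  forall x, K x -> forall i, `|x i 0| <= r * `|x 0 0|.
Proof.
have [r r_ge0 Kr] := cone_slice_bound; exists r => // x Kx i.
have [y [Ky]] := hLne; rewrite e1_tr_mul => y1.
have [x0_lt0|x0_gt0|x0] := ltgtP (x 0 0) 0; last first.
- by rewrite (cone_first_entry0 Kx x0) !mxE normr0 mulr0.
- have Kx' : K ((x 0 0)^-1 *: x) by apply: (proj2 hKcone); rewrite // invr_ge0 ltW.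
  have := Kr _ Kx'; rewrite mxE mulVf ?gt_eqF // => /(_ erefl i).
  by rewrite mxE normrM gtr0_norm ?invr_gt0 // ler_pdivrMl // (gtr0_norm x0_gt0) mulrC.
- have Kz : K (y + (- x 0 0)^-1 *: x).
    by apply: (proj1 hKcone) => //; apply: (proj2 hKcone); rewrite // invr_ge0 oppr_ge0 ltW.
  have /cone_first_entry0 : (y + (- x 0 0)^-1 *: x) 0 0 = 0.
    by rewrite !mxE y1 invrN mulNr mulVf ?lt_eqF // subrr.
  move=> /(_ Kz) /matrixP /(_ i 0); rewrite !mxE => /eqP; rewrite addr_eq0 => /eqP yi.
  have := Kr y Ky y1 i; rewrite yi normrN normrM gtr0_norm ?invr_gt0 ?oppr_gt0 //.
  by rewrite ler_pdivrMl ?oppr_gt0 // (ltr0_norm x0_lt0) mulrC.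
Qed.

Lemma exists_COP_shift S : symmx S -> exists t : R, COP K (t *: delta_mx 0 0 - S).
Proof.
move=> sS; have [r r_ge0 Kr] := cone_entry_bound.
exists (r ^+ 2 * \sum_i \sum_j `|S i j|); split.
  exact: symmxD (symmxZ _ (symmx_delta _ _)) (symmxN sS).
move=> x Kx; rewrite qformD qformZ qformN qform_delta subr_ge0 qformE.
rewrite mulrAC big_distrr; apply: ler_sum => i _.
rewrite big_distrr; apply: ler_sum => j _ /=.
have xij := ler_pM (normr_ge0 _) (normr_ge0 _) (Kr x Kx i) (Kr x Kx j).
have := ler_wpM2r (normr_ge0 (S i j)) xij.
rewrite -[x 0 0 ^+ 2]real_normK ?num_real //.
have := ler_norm (x i 0 * S i j * x j 0); rewrite !normrM; lra.
Qed.

End ConeBound.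

Section ConicDuality.
Variables (R : realType) (k n : nat) (Q : 'I_n -> 'M[R]_k.+1) (K : set 'cV[R]_k.+1).
Local Notation E := (delta_mx 0 0 : 'M[R]_k.+1).

(* Symmetrising [A] defines the dual value on all square matrices, the space on
   which the Hahn-Banach argument below runs. *)
Definition slack t (psi : 'I_n -> R) A := t *: E + \sum_i psi i *: Q i - sym_part A.

Definition dual_feasible A := [set t | exists psi, COP K (slack t psi A)].

Definition dual_value A := inf (dual_feasible A).

Definition primal_feasible X := frob E X = 1 /\ CP K X /\ forall i, frob (Q i) X = 0.

Lemma slackD t psi A u phi B :
  slack t psi A + slack u phi B = slack (t + u) (fun i => psi i + phi i) (A + B).
Proof.
rewrite /slack addrACA -opprD addrACA -scalerDl sym_partD -big_split /=.
by congr (_ + _ + _); apply: eq_bigr => i _; rewrite scalerDl.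
Qed.

Lemma slackZ a t psi A : a *: slack t psi A = slack (a * t) (fun i => a * psi i) (a *: A).
Proof.
rewrite /slack scalerBr scalerDr scalerA sym_partZ scaler_sumr.
by congr (_ + _ - _); apply: eq_bigr => i _; rewrite scalerA.
Qed.

Lemma slack_cst t A : slack t (fun=> 0) A = t *: E - sym_part A.
Proof. by rewrite /slack big1 ?addr0 // => i _; rewrite scale0r. Qed.

Lemma slack_unit i c A :
  slack 0 (fun l => if l == i then c else 0) A = c *: Q i - sym_part A.
Proof.
rewrite /slack scale0r add0r (bigD1 i) //= eqxx big1 ?addr0 // => l /negbTE ->.
exact: scale0r.
Qed.

Lemma dual_feasibleD A B t u :
  dual_feasible A t -> dual_feasible B u -> dual_feasible (A + B) (t + u).
Proof.
move=> [psi hpsi] [phi hphi]; exists (fun i => psi i + phi i).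
by rewrite -slackD; exact: COPD.
Qed.

Lemma dual_feasibleZ a A t : 0 <= a -> dual_feasible A t -> dual_feasible (a *: A) (a * t).
Proof.
move=> a_ge0 [psi hpsi]; exists (fun i => a * psi i).
by rewrite -slackZ; exact: COPZ.
Qed.

Lemma dual_feasible_slack0 A t psi : slack t psi A = 0 -> dual_feasible A t.
Proof. by move=> slack0; exists psi; rewrite slack0; exact: COP0. Qed.

Lemma dual_feasible0 t : 0 <= t -> dual_feasible 0 t.
Proof.
by move=> t_ge0; exists (fun=> 0); rewrite slack_cst sym_part0 subr0; exact/COPZ/COP_delta.
Qed.

Lemma dual_feasible_ge A t u : dual_feasible A t -> t <= u -> dual_feasible A u.
Proof.
move=> DAt le_tu; have D0 : dual_feasible 0 (u - t) by apply: dual_feasible0; rewrite subr_ge0.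
by have := dual_feasibleD DAt D0; rewrite addr0 addrC subrK.
Qed.

Lemma weak_duality X A t :
  primal_feasible X -> dual_feasible A t -> frob (sym_part A) X <= t.
Proof.
move=> [XE [[_ X_dual] XQ]] [psi /X_dual].
rewrite /slack frobD frobN frobD frobZ XE mulr1 frob_sum big1 ?addr0 ?subr_ge0 // => i _.
by rewrite frobZ XQ mulr0.
Qed.

Section DualFinite.
Hypotheses (hKcone : convex_cone K)
  (hLne : [set x | K x /\ ((e1 R k)^T *m x) 0 0 = 1] !=set0)
  (hLbd : bounded_vset [set x | K x /\ ((e1 R k)^T *m x) 0 0 = 1]).

Lemma dual_feasible_neq0 A : dual_feasible A !=set0.
Proof.
have [t ht] := exists_COP_shift hKcone hLne hLbd (symmx_sym_part A).
by exists t, (fun=> 0); rewrite slack_cst.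
Qed.

(* A negative certificate for the homogeneous problem can be added to any dual
   solution with an arbitrarily large weight. *)
Lemma dual_feasible_unbounded A t0 : dual_feasible 0 t0 -> t0 < 0 -> dual_feasible A = setT.
Proof.
move=> D0t0 t0_lt0; apply/seteqP; split=> // b _.
have [t DAt] := dual_feasible_neq0 A.
pose l := `|t - b| / - t0.
have l_ge0 : 0 <= l by rewrite divr_ge0 // oppr_ge0 ltW.
have := dual_feasibleD (dual_feasibleZ l_ge0 D0t0) DAt; rewrite scaler0 add0r.
move=> /dual_feasible_ge; apply.
have -> : l * t0 = - `|t - b| by rewrite /l invrN mulrN mulNr -mulrA mulVf ?lt_eqF // mulr1.
by have := ler_norm (t - b); lra.
Qed.

Section DualBounded.
Hypotheses (hQ : forall i, symmx (Q i)) (dual0_ge0 : forall t, dual_feasible 0 t -> 0 <= t).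

Lemma dual_feasible_lbound A : has_lbound (dual_feasible A).
Proof.
have [u DNu] := dual_feasible_neq0 (- A); exists (- u) => t DAt.
by have := dual_feasibleD DAt DNu; rewrite subrr => /dual0_ge0; lra.
Qed.

Lemma dual_value_le A t : dual_feasible A t -> dual_value A <= t.
Proof. exact: (ge_inf (dual_feasible_lbound A)). Qed.

Lemma le_dual_value A a : (forall t, dual_feasible A t -> a <= t) -> a <= dual_value A.
Proof. exact: (lb_le_inf (dual_feasible_neq0 A)). Qed.

Lemma dual_value_slack0 A t psi : slack t psi A = 0 -> dual_value A <= t.
Proof. by move/dual_feasible_slack0/dual_value_le. Qed.

Lemma dual_value_subadditive A B : dual_value (A + B) <= dual_value A + dual_value B.
Proof.
suff : dual_value (A + B) - dual_value A <= dual_value B by lra.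
apply: le_dual_value => u DBu.
suff : dual_value (A + B) - u <= dual_value A by lra.
apply: le_dual_value => t DAt.
by have := dual_value_le (dual_feasibleD DAt DBu); lra.
Qed.

Lemma dual_value_scale_le a A : 0 < a -> dual_value (a *: A) <= a * dual_value A.
Proof.
move=> a_gt0; rewrite mulrC -ler_pdivrMr //; apply: le_dual_value => t DAt.
by rewrite ler_pdivrMr // mulrC; exact/dual_value_le/dual_feasibleZ/DAt/ltW.
Qed.

Lemma dual_value_sublinear : sublinear dual_value.
Proof.
split=> [|a A a_gt0]; first exact: dual_value_subadditive.
apply/eqP; rewrite eq_le (dual_value_scale_le A a_gt0) /=.
have ainv_gt0 : 0 < a^-1 by rewrite invr_gt0.
have := dual_value_scale_le (a *: A) ainv_gt0.
by rewrite scalerA mulVf ?gt_eqF // scale1r -ler_pdivlMl // invrK.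
Qed.

Lemma exists_primal_optimal A : exists2 Y, primal_feasible Y & frob A Y = dual_value A.
Proof.
have [Y [Y_le YA]] := sublinear_frob_support A dual_value_sublinear.
have frob_eq B c psi phi : slack c psi B = 0 -> slack (- c) phi (- B) = 0 -> frob B Y = c.
  move=> /dual_value_slack0 hB /dual_value_slack0 hNB.
  exact: frob_eq_of_dominated Y_le hB hNB.
have sym_E := symmx_delta R 0 : symmx E.
exists Y => //; split; [|split].
- apply: (frob_eq _ _ (fun=> 0) (fun=> 0)).
    by rewrite slack_cst sym_part_id // scale1r subrr.
  by rewrite slack_cst sym_partN sym_part_id // scaleN1r subrr.
- split=> [|M COPM].
    apply/symmxP => i j.
    have := frob_eq (delta_mx i j - (delta_mx i j)^T) 0 (fun=> 0) (fun=> 0).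
    rewrite oppr0 !slack_cst sym_partN sym_part_skew scale0r !oppr0 !addr0.
    by move=> /(_ erefl erefl); rewrite frobD frobN trmx_delta !frob_delta; lra.
  have : dual_value (- M) <= 0.
    apply: dual_value_le; exists (fun=> 0).
    by rewrite slack_cst sym_partN sym_part_id ?scale0r ?sub0r ?opprK //; case: COPM.
  by have := Y_le (- M); rewrite frobN; lra.
- move=> i; apply: (frob_eq _ _ (fun l => if l == i then 1 else 0)
                              (fun l => if l == i then -1 else 0)).
    by rewrite slack_unit scale1r sym_part_id ?subrr.
  by rewrite oppr0 slack_unit scaleN1r sym_partN sym_part_id ?subrr.
Qed.

End DualBounded.
End DualFinite.
End ConicDuality.

Theorem lemma8 (R : realType) (k n : nat) (hn : (0 < n)%N)
  (Q0 : 'M[R]_k.+1) (Q : 'I_n -> 'M[R]_k.+1)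
  (hQ0 : symmx Q0) (hQ : forall i, symmx (Q i))
  (K : set 'cV[R]_k.+1)
  (hKne : K !=set0) (hKcl : closed K) (hKcone : convex_cone K)
  (hLne : [set x | K x /\ ((e1 R k)^T *m x) 0 0 = 1] !=set0)
  (hLbd : bounded_vset [set x | K x /\ ((e1 R k)^T *m x) 0 0 = 1]) :
  ereal_sup [set (frob Q0 X)%:E | X in
      [set X | frob (e1 R k *m (e1 R k)^T) X = 1 /\ CP K X /\
               forall i, frob (Q i) X = 0]] =
  ereal_inf [set beta%:E | beta in
      [set beta : R | exists psi : 'I_n -> R,
         COP K (beta *: (e1 R k *m (e1 R k)^T) + \sum_(i < n) psi i *: Q i - Q0)]].
Proof.
have -> : e1 R k *m (e1 R k)^T = delta_mx 0 0 by rewrite trmx_delta mul_delta_mx.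
rewrite -(sym_part_id hQ0) -/(slack Q _ _ Q0) -/(dual_feasible Q K Q0).
rewrite -/(primal_feasible Q K).
have [[t0 [D0t0 t0_lt0]]|dual_bounded] := pselect (exists t, dual_feasible Q K 0 t /\ t < 0).
  rewrite (dual_feasible_unbounded hKcone hLne hLbd _ D0t0 t0_lt0) ereal_inf_real.
  apply/ereal_sup_ninfty => y [X PX _]; have := weak_duality PX D0t0.
  by rewrite sym_part0 frob0; lra.
have dual0_ge0 t : dual_feasible Q K 0 t -> 0 <= t.
  by move=> D0t; rewrite leNgt; apply/negP => t_lt0; apply: dual_bounded; exists t.
have [Y PY YQ0] := exists_primal_optimal hKcone hLne hLbd hQ dual0_ge0 Q0.
have dual_lbound : has_lbound (dual_feasible Q K Q0) by apply: dual_feasible_lbound.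
have dual_neq0 : dual_feasible Q K Q0 !=set0 by apply: dual_feasible_neq0.
rewrite ereal_inf_EFin //; apply/eqP; rewrite eq_le; apply/andP; split.
  apply: ge_ereal_sup => _ [X PX <-]; rewrite lee_fin.
  by apply: le_dual_value => // t; exact: weak_duality.
by apply: ereal_sup_ubound; exists Y; rewrite // sym_part_id // YQ0.
Qed.
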